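(* Let $q\ge 3$ be odd and $n\ge 1$. There exists an ordering of all words of $\mathbb{Z}_q^{n}$ in which consecutive words have Lee distance $1$, beginning with $(0,0,\ldots,0)$ and ending with $(1,1,\ldots,1)$.
   Context: Lee distance between $v,u\in\mathbb{Z}_q^{n}$ is $\sum_{i}\min\{|v_i-u_i|,q-|v_i-u_i|\}$, entries regarded as integers in $\{0,\ldots,q-1\}$. *)

From mathcomp Require Import all_boot all_order.
Set Implicit Arguments. Unset Strict Implicit. Unset Printing Implicit Defensive.

Definition word (q n : nat) := {ffun 'I_n -> 'I_q}.

Definition natdist (a b : nat) : nat := (a - b) + (b - a).

Definition lee_dist (q n : nat) (v u : word q n) : nat :=
  \sum_(i < n) minn (natdist (v i) (u i)) (q - natdist (v i) (u i)).

From mathcomp Require Import all_boot all_order all_algebra zify.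
Set Implicit Arguments. Unset Strict Implicit. Unset Printing Implicit Defensive.
Import GRing.Theory.

(* Walking backwards around the cycle Z_q, 0, -1, ..., -(q-1) = 1, is a Lee
   path through all of Z_q.  Given a Lee path P through Z_q^n from 0...0 to
   1...1, run through the blocks {x} x Z_q^n in this order of x, alternately
   along P and along P reversed: consecutive words inside a block differ as in
   P, and consecutive blocks are joined by a step in the first coordinate
   only.  For q odd there are an odd number of blocks, so the last one is
   traversed forwards and the path ends at 1...1. *)

Definition wcons q n (x : 'I_q) (v : word q n) : word q n.+1 :=
  [ffun i => if unlift ord0 i is Some j then v j else x].

Definition wtail q n (w : word q n.+1) : word q n := [ffun j => w (lift ord0 j)].

Lemma wcons_tail q n (w : word q n.+1) : wcons (w ord0) (wtail w) = w.
Proof. by apply/ffunP => i; rewrite !ffunE; case: unliftP => [j|] ->; rewrite ?ffunE. Qed.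

Lemma wcons_const q n (x : 'I_q) : wcons x [ffun=> x] = [ffun=> x] :> word q n.+1.
Proof. by apply/ffunP => i; rewrite !ffunE; case: unliftP => [j|] _; rewrite ?ffunE. Qed.

Lemma word0_const q (w : word q 0) (x : 'I_q) : w = [ffun=> x].
Proof. by apply/ffunP => -[]. Qed.

Definition lee_coord q (a b : nat) := minn (natdist a b) (q - natdist a b).

Lemma lee_coordxx q a : lee_coord q a a = 0.
Proof. by rewrite /lee_coord /natdist subnn min0n. Qed.

Lemma lee_distxx q n (v : word q n) : lee_dist v v = 0.
Proof. by rewrite /lee_dist big1 // => i _; apply: lee_coordxx. Qed.

Lemma lee_dist_cons q n x y (v u : word q n) :
  lee_dist (wcons x v) (wcons y u) = lee_coord q x y + lee_dist v u.
Proof.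
rewrite /lee_dist big_ord_recl !ffunE unlift_none; congr (_ + _).
by apply: eq_bigr => i _; rewrite !ffunE liftK.
Qed.

Definition lee_adj1 q : rel 'I_q := fun x y => lee_coord q x y == 1.

Definition lee_adj q n : rel (word q n) := fun v u => lee_dist v u == 1.

Lemma lee_adj_sym q n : symmetric (@lee_adj q n).
Proof. by move=> v u; rewrite /lee_adj /lee_dist; under eq_bigr do rewrite /natdist addnC. Qed.

Lemma lee_adj_cons q n (x : 'I_q) (v u : word q n) :
  lee_adj v u -> lee_adj (wcons x v) (wcons x u).
Proof. by rewrite /lee_adj lee_dist_cons lee_coordxx. Qed.

Lemma lee_adj1_cons q n (x y : 'I_q) (v : word q n) :
  lee_adj1 x y -> lee_adj (wcons x v) (wcons y v).
Proof. by rewrite /lee_adj lee_dist_cons lee_distxx addn0. Qed.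

Fixpoint snake q n (L : seq 'I_q) (P : seq (word q n)) : seq (word q n.+1) :=
  if L is x :: L' then map (wcons x) P ++ snake L' (rev P) else [::].

Lemma size_snake q n L P : size (@snake q n L P) = size L * size P.
Proof. by elim: L P => //= x L IH P; rewrite size_cat size_map IH size_rev mulSn. Qed.

Lemma mem_snake q n L P x v : x \in L -> v \in P -> wcons x v \in @snake q n L P.
Proof.
elim: L P => [|y L IH] P //=; rewrite in_cons mem_cat => /orP[/eqP->|xL] vP.
  by rewrite map_f.
by rewrite IH ?orbT ?mem_rev.
Qed.

Lemma rev_cons_last (T : Type) (a : T) P : rev (a :: P) = last a P :: rev (belast a P).
Proof. by rewrite lastI rev_rcons. Qed.

Lemma snake_sorted q n L P :
  sorted (@lee_adj1 q) L -> sorted (@lee_adj q n) P -> sorted (lee_adj (n:=n.+1)) (snake L P).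
Proof.
elim: L P => [|x [|y L] IH] P //= sL sP.
  by rewrite cats0 sorted_map; apply: sub_sorted sP => v u /=; apply: lee_adj_cons.
case/andP: sL => xy sL.
have sPr : sorted (@lee_adj q n) (rev P).
  by rewrite rev_sorted; apply: sub_sorted sP => v u; rewrite lee_adj_sym.
case: P sP sPr => [|a P] sP; first by rewrite /= (IH [::]).
rewrite rev_cons_last => sPr; have := IH _ sL sPr.
set S := snake _ _ => sS.
change (sorted (lee_adj (n:=n.+1)) (map (wcons x) (a :: P) ++ S)).
have S_cons : S = wcons y (last a P) :: behead S by [].
rewrite S_cons /= in sS; rewrite S_cons /= cat_path path_map /= last_map sS.
rewrite lee_adj1_cons // !andbT.
exact: sub_path (@lee_adj_cons q n x) _ _ sP.
Qed.

Lemma last_snake q n (x : 'I_q) L (a : word q n) P d :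
  last d (snake (x :: L) (a :: P)) = wcons (last x L) (if odd (size L) then a else last a P).
Proof.
elim: L x a P d => [|y L IH] x a P d; first by rewrite /= cats0 last_map.
rewrite -[snake _ _]/(map (wcons x) (a :: P) ++ snake (y :: L) (rev (a :: P))).
rewrite last_cat rev_cons_last IH /=; case: (odd (size L)) => //=.
rewrite -[last (last a P) _]/(last a (last a P :: rev (belast a P))) -rev_cons_last.
by rewrite rev_cons last_rcons.
Qed.

Definition lee_tour p : seq 'I_p.+1 := [seq (- k)%R | k <- enum 'I_p.+1].

Lemma size_lee_tour p : size (lee_tour p) = p.+1.
Proof. by rewrite size_map size_enum_ord. Qed.

Lemma lee_tour_head p : lee_tour p = ord0 :: behead (lee_tour p).
Proof. by rewrite /lee_tour enum_ordSl /= oppr0. Qed.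

Lemma last_lee_tour p x : 0 < p -> last x (lee_tour p) = inord 1.
Proof.
move=> p_gt0; apply: val_inj; rewrite /lee_tour enum_ordSr map_rcons last_rcons.
by rewrite /= inordK // subSn // subnn modn_small.
Qed.

Lemma mem_lee_tour p x : x \in lee_tour p.
Proof. by rewrite -[x]opprK map_f ?mem_enum. Qed.

Lemma nth_lee_tour p i : i < p.+1 -> val (nth ord0 (lee_tour p) i) = (p.+1 - i) %% p.+1.
Proof. by move=> ltip; rewrite (nth_map ord0) ?size_enum_ord // -{2}(nth_enum_ord ord0 ltip). Qed.

Lemma lee_tour_sorted p : sorted (@lee_adj1 p.+1) (lee_tour p).
Proof.
apply/(sortedP ord0) => i; rewrite size_lee_tour => ltip.
rewrite /lee_adj1 !nth_lee_tour ?(ltnW ltip) //; case: i ltip => [|i] ltip.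
  by rewrite subn0 modnn modn_small // /lee_coord /natdist; apply/eqP; lia.
by rewrite !modn_small /lee_coord /natdist; try apply/eqP; lia.
Qed.

Fixpoint lee_gray p n : seq (word p.+1 n) :=
  if n is n'.+1 then snake (lee_tour p) (lee_gray p n') else [:: [ffun=> ord0]].

Lemma size_lee_gray p n : size (lee_gray p n) = p.+1 ^ n.
Proof. by elim: n => //= n IH; rewrite size_snake size_lee_tour IH expnS. Qed.

Lemma mem_lee_gray p n w : w \in lee_gray p n.
Proof.
elim: n w => [|n IH] w; first by rewrite (word0_const w ord0) mem_seq1.
by rewrite -(wcons_tail w) mem_snake ?mem_lee_tour.
Qed.

Lemma lee_gray_uniq p n : uniq (lee_gray p n).
Proof.
apply: (leq_size_uniq (enum_uniq (word p.+1 n))) => [w _|]; first exact: mem_lee_gray.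
by rewrite size_lee_gray -cardE card_ffun !card_ord.
Qed.

Lemma lee_gray_sorted p n : sorted (@lee_adj p.+1 n) (lee_gray p n).
Proof. by elim: n => //= n IH; rewrite snake_sorted ?lee_tour_sorted. Qed.

Lemma lee_gray_head p n : ohead (lee_gray p n) = Some [ffun=> ord0].
Proof.
elim: n => //= n; rewrite lee_tour_head.
by case: (lee_gray p n) => [|a P] //= [->]; rewrite wcons_const.
Qed.

Lemma last_lee_gray p n d : 0 < p -> ~~ odd p -> last d (lee_gray p n) = [ffun=> inord 1].
Proof.
move=> p_gt0 p_even; elim: n d => [|n IH] d /=; first exact: word0_const.
have := lee_gray_head p n; rewrite lee_tour_head.
case: (lee_gray p n) IH => [|a P] // IH _.
rewrite last_snake size_behead size_lee_tour (negbTE p_even) [last a P](IH a).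
by rewrite -[last ord0 _]/(last ord0 (ord0 :: _)) -lee_tour_head last_lee_tour ?wcons_const.
Qed.

Theorem lemma4 (q n : nat) (Hq3 : 3 <= q) (Hqodd : odd q) (Hn : 1 <= n) :
  exists s : seq (word q n),
    [/\ uniq s,
        (forall w : word q n, w \in s),
        exists2 w0 : word q n, ohead s = Some w0 & forall i, (w0 i : nat) = 0,
        exists2 w1 : word q n, ohead (rev s) = Some w1 & forall i, (w1 i : nat) = 1
      & forall (i : nat) (w0 : word q n), i.+1 < size s ->
          lee_dist (nth w0 s i) (nth w0 s i.+1) = 1].
Proof.
case: q => [|p] // in Hq3 Hqodd *.
have p_gt0 : 0 < p by lia.
exists (lee_gray p n); split.
- exact: lee_gray_uniq.
- exact: mem_lee_gray.
- by exists [ffun=> ord0]; rewrite ?lee_gray_head // => i; rewrite ffunE.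
- exists [ffun=> inord 1]; last by move=> i; rewrite ffunE inordK.
  have := lee_gray_head p n; have := @last_lee_gray p n _ p_gt0 Hqodd.
  by case: (lee_gray p n) => [|a P] // /(_ a) /= <-; rewrite rev_cons_last.
- by move=> i w0 ltis; apply/eqP/(sortedP w0 (lee_gray_sorted p n)).
Qed.
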